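(* Let $C=\operatorname{conv}(\gamma_1\cup\gamma_2)\subset\mathbb{R}^3$, where $\gamma_1(t)=(\cos t,\sin t,1)$ for $t\in[0,\pi/2]$ and $\gamma_2(t)=(\cos t,\sin t,-1)$ for $t\in[0,\pi]$, and let $K=\operatorname{cone}(C\times\{1\})\subset\mathbb{R}^4$. Then $K$ is facially dual complete, but the tangent cone $\mathcal{T}(\bar x;C)$ at $\bar x=(0,1,1)$ is not facially exposed; in particular $K$ is not strongly tangentially exposed. Thus strong tangential exposure is not necessary for facial dual completeness.
   Context: $\mathbb{R}^4$ is identified with its dual. $\operatorname{cone}(S)=\{\lambda s:\lambda\ge0,s\in\operatorname{conv}S\}$. Tangent cone: $\mathcal{T}(x;D)=\operatorname{cl}\{d: x+\epsilon d\in D\text{ for some }\epsilon>0\}$. A face of a closed convex set $D$ is a closed convex $F\subseteq D$ such that $x\in F$, $y,z\in D$, $x\in(y,z)$ imply $y,z\in F$; it is exposed if $F=D\cap H$ for some supporting hyperplane $H$; $D$ is facially exposed if every nonempty face $F\ne D$ is exposed. A closed convex cone $K$ is tangentially exposed if $\mathcal{T}(x;K)\cap\operatorname{span}F=\mathcal{T}(x;F)$ for all faces $F\ne K$, $x\in F$. Lexicographic tangent cones: cones obtained by iterating the tangent-cone operation (tangent cones of $K$, tangent cones of those, etc.); $K$ is strongly tangentially exposed if $K$ and all its lexicographic tangent cones are tangentially exposed. $K$ is facially dual complete if $K^*+F^\perp$ is closed for every nonempty face $F\ne K$, where $K^*=\{s:\langle s,x\rangle\ge0\ \forall x\in K\}$,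 $F^\perp=\{s:\langle s,x\rangle=0\ \forall x\in F\}$. *)

(* classical reals.  Vectors of R^n are represented as
   functions nat -> R vanishing at indices >= n (predicate inRn n). *)
From Stdlib Require Import Reals List.
Open Scope R_scope.

Definition Vec := nat -> R.
Definition VSet := Vec -> Prop.

Definition inRn (n : nat) (x : Vec) : Prop := forall i, (n <= i)%nat -> x i = 0.

Definition vzero : Vec := fun _ => 0.
Definition vadd (x y : Vec) : Vec := fun i => x i + y i.
Definition vscale (a : R) (x : Vec) : Vec := fun i => a * x i.

Fixpoint ip (n : nat) (x y : Vec) : R :=
  match n with
  | O => 0
  | S m => ip m x y + x m * y m
  end.

Definition vdist (n : nat) (x y : Vec) : R :=
  sqrt (ip n (vadd x (vscale (-1) y)) (vadd x (vscale (-1) y))).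

Definition lincomb (l : list (R * Vec)) : Vec :=
  fold_right (fun p acc => vadd (vscale (fst p) (snd p)) acc) vzero l.
Definition wsum (l : list (R * Vec)) : R :=
  fold_right (fun p acc => fst p + acc) 0 l.

Definition conv (S : VSet) : VSet := fun x =>
  exists l : list (R * Vec),
    Forall (fun p => 0 <= fst p /\ S (snd p)) l /\ wsum l = 1 /\ x = lincomb l.

Definition cone (S : VSet) : VSet := fun x =>
  exists lam s, 0 <= lam /\ conv S s /\ x = vscale lam s.

Definition span (S : VSet) : VSet := fun x =>
  exists l : list (R * Vec), Forall (fun p => S (snd p)) l /\ x = lincomb l.

Definition closure (n : nat) (D : VSet) : VSet := fun x =>
  inRn n x /\ forall eps, 0 < eps -> exists y, D y /\ vdist n x y < eps.

Definition closed (n : nat) (D : VSet) : Prop :=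
  forall x, closure n D x -> D x.

Definition convex (D : VSet) : Prop :=
  forall x y t, D x -> D y -> 0 <= t <= 1 ->
    D (vadd (vscale (1 - t) x) (vscale t y)).

Definition set_eq (A B : VSet) : Prop := forall x, A x <-> B x.

Definition tangent (n : nat) (x : Vec) (D : VSet) : VSet :=
  closure n (fun d => inRn n d /\ exists eps, 0 < eps /\ D (vadd x (vscale eps d))).

Definition in_open_seg (x y z : Vec) : Prop :=
  exists t, 0 < t < 1 /\ x = vadd (vscale (1 - t) y) (vscale t z).

Definition face (n : nat) (D F : VSet) : Prop :=
  closed n F /\ convex F /\ (forall x, F x -> D x) /\
  (forall x y z, F x -> D y -> D z -> in_open_seg x y z -> F y /\ F z).

Definition exposed (n : nat) (D F : VSet) : Prop :=
  exists (a : Vec) (b : R),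
    inRn n a /\ (exists i, (i < n)%nat /\ a i <> 0) /\
    (forall x, D x -> ip n a x >= b) /\
    (forall x, F x <-> (D x /\ ip n a x = b)).

Definition facially_exposed (n : nat) (D : VSet) : Prop :=
  forall F, face n D F -> (exists x, F x) -> ~ set_eq F D -> exposed n D F.

Definition dual (n : nat) (K : VSet) : VSet := fun s =>
  inRn n s /\ forall x, K x -> ip n s x >= 0.
Definition perp (n : nat) (F : VSet) : VSet := fun s =>
  inRn n s /\ forall x, F x -> ip n s x = 0.

Definition msum (A B : VSet) : VSet := fun z =>
  exists a b, A a /\ B b /\ z = vadd a b.

Definition facially_dual_complete (n : nat) (K : VSet) : Prop :=
  forall F, face n K F -> (exists x, F x) -> ~ set_eq F K ->
    closed n (msum (dual n K) (perp n F)).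

Definition tangentially_exposed (n : nat) (K : VSet) : Prop :=
  forall F x, face n K F -> ~ set_eq F K -> F x ->
    set_eq (fun d => tangent n x K d /\ span F d) (tangent n x F).

Inductive lex_tangent (n : nat) (K : VSet) : VSet -> Prop :=
  | lex_base : forall x, K x -> lex_tangent n K (tangent n x K)
  | lex_step : forall L x, lex_tangent n K L -> L x -> lex_tangent n K (tangent n x L).

Definition strongly_tangentially_exposed (n : nat) (K : VSet) : Prop :=
  tangentially_exposed n K /\
  forall L, lex_tangent n K L -> tangentially_exposed n L.

Definition vec3 (a b c : R) : Vec := fun i =>
  match i with O => a | 1%nat => b | 2%nat => c | _ => 0 end.
Definition vec4 (a b c d : R) : Vec := fun i =>
  match i with O => a | 1%nat => b | 2%nat => c | 3%nat => d | _ => 0 end.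

Definition gamma12 : VSet := fun x =>
  (exists t, 0 <= t <= PI / 2 /\ x = vec3 (cos t) (sin t) 1) \/
  (exists t, 0 <= t <= PI /\ x = vec3 (cos t) (sin t) (-1)).

Definition C_ex : VSet := conv gamma12.

Definition C_times_1 : VSet := fun x =>
  exists y, C_ex y /\ x = vec4 (y 0%nat) (y 1%nat) (y 2%nat) 1.

Definition K_ex : VSet := cone C_times_1.

Definition xbar : Vec := vec3 0 1 1.

(* C is the convex hull of a quarter circle at height 1 and a half circle at height -1.
   In the tangent cone of C at xbar = (0,1,1), the directions (0,0,z), z <= 0, form a face.
   A functional exposing it must be nonnegative on the directions from xbar to the lower
   half circle near (0,1,-1); letting those points tend to (0,1,-1) forces it to vanish
   on (1,0,0), a direction of the cone along the upper quarter circle.  So that face is not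
   exposed.  The same picture in the tangent cone of K at (0,1,1,1) makes the direction
   -e1 tangent to the cone but not to its face {d1 = d3, d0 >= 0, d2 <= d3} at
   (0,0,-1,0), so that tangent cone is not tangentially exposed.

   For facial dual completeness, a face F of K is spanned by the lifted arc points it
   contains, and these are rigid: two of them on the same arc, or one on each arc, force
   the whole arc (or all of K) into F except in a few degenerate configurations.  Hence a
   proper face contains either a whole arc and nothing of the other one, or at most three
   arc points forming one of a few explicit patterns.  In each case a functional x that is
   nonnegative on F agrees on F with an explicit element k of K^*, so x = k + (x - k)
   lies in K^* + F^perp; as every x in the closure of K^* + F^perp is nonnegative on F,
   that sum is closed. *)

From Stdlib Require Import Reals Lra Psatz List FunctionalExtensionality Classical.
Open Scope R_scope.

Lemma vext (x y : Vec) : (forall i, x i = y i) -> x = y.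
Proof. intros; apply functional_extensionality; auto. Qed.

Ltac solve_vec_eq := let i := fresh "i" in apply vext; intros [|[|[|[|i]]]];
  simpl; unfold vec4, vec3, vadd, vscale, vzero; simpl; try ring.

Lemma mul_le_of_le_div e A D : 0 < D -> e <= A / D -> e * D <= A.
Proof.
  intros HD H. apply Rmult_le_compat_r with (r := D) in H; [|lra].
  unfold Rdiv in H. rewrite Rmult_assoc, Rinv_l in H; lra.
Qed.

Lemma div_unit_interval a b : 0 < b -> 0 <= a <= b -> 0 <= a / b <= 1.
Proof.
  intros Hb Ha. split; [apply Rmult_le_pos; [lra|left; apply Rinv_0_lt_compat; lra]|].
  apply Rmult_le_reg_r with b; [lra|]. unfold Rdiv. rewrite Rmult_assoc, Rinv_l; lra.
Qed.

Lemma inRn_vec3 a b c : inRn 3 (vec3 a b c).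
Proof. intros [|[|[|i]]] H; simpl; auto; lia. Qed.

Lemma inRn_vec4 a b c d : inRn 4 (vec4 a b c d).
Proof. intros [|[|[|[|i]]]] H; simpl; auto; lia. Qed.

Lemma inRn_vadd n x y : inRn n x -> inRn n y -> inRn n (vadd x y).
Proof. intros Hx Hy i Hi. unfold vadd. rewrite Hx, Hy by auto. ring. Qed.

Lemma inRn_vscale n a x : inRn n x -> inRn n (vscale a x).
Proof. intros Hx i Hi. unfold vscale. rewrite Hx by auto. ring. Qed.

Lemma vec3_eta d : inRn 3 d -> d = vec3 (d 0%nat) (d 1%nat) (d 2%nat).
Proof. intros H. apply vext; intros [|[|[|i]]]; simpl; auto. apply H; lia. Qed.

Lemma vec4_eta d : inRn 4 d -> d = vec4 (d 0%nat) (d 1%nat) (d 2%nat) (d 3%nat).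
Proof. intros H. apply vext; intros [|[|[|[|i]]]]; simpl; auto. apply H; lia. Qed.

Lemma ip_vadd n a x y : ip n a (vadd x y) = ip n a x + ip n a y.
Proof. induction n; simpl; [lra|]. rewrite IHn; unfold vadd; ring. Qed.

Lemma ip_vscale n a c x : ip n a (vscale c x) = c * ip n a x.
Proof. induction n; simpl; [lra|]. rewrite IHn; unfold vscale; ring. Qed.

Lemma ip_vzero n a : ip n a vzero = 0.
Proof. induction n; simpl; [lra|]. rewrite IHn; unfold vzero; ring. Qed.

Lemma ip_sym n a x : ip n a x = ip n x a.
Proof. induction n; simpl; [lra|]. rewrite IHn; ring. Qed.

Lemma ip_self_ge0 n v : 0 <= ip n v v.
Proof. induction n; simpl; nra. Qed.

Lemma sqr_coord_le_ip n v i : (i < n)%nat -> v i * v i <= ip n v v.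
Proof.
  induction n; intros Hi; [lia|]. simpl.
  destruct (Nat.eq_dec i n) as [->|Hne].
  - pose proof (ip_self_ge0 n v); lra.
  - assert (IH := IHn ltac:(lia)). nra.
Qed.

Lemma coord_le_vdist n x y i : (i < n)%nat -> Rabs (x i - y i) <= vdist n x y.
Proof.
  intros Hi. unfold vdist.
  replace (x i - y i) with (vadd x (vscale (-1) y) i) by (unfold vadd, vscale; ring).
  rewrite <- sqrt_Rsqr_abs. apply sqrt_le_1_alt. apply sqr_coord_le_ip; auto.
Qed.

Fixpoint norm1 (n : nat) (a : Vec) : R :=
  match n with O => 0 | S m => norm1 m a + Rabs (a m) end.

Lemma norm1_ge0 n a : 0 <= norm1 n a.
Proof. induction n; simpl; [lra|]. pose proof (Rabs_pos (a n)); lra. Qed.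

Lemma norm1_zero m v : (forall i, (i < m)%nat -> v i = 0) -> norm1 m v = 0.
Proof.
  induction m; intros H; simpl; [lra|].
  rewrite IHm, H, Rabs_R0 by (lia || (intros; apply H; lia)); lra.
Qed.

Lemma norm1_single_coord n v j : (forall i, i <> j -> v i = 0) -> norm1 n v <= Rabs (v j).
Proof.
  intros Hv. induction n; simpl; [apply Rabs_pos|].
  destruct (Nat.eq_dec n j) as [->|Hne].
  - rewrite norm1_zero by (intros; apply Hv; lia). lra.
  - rewrite Hv, Rabs_R0 by auto. lra.
Qed.

Lemma ip_abs_le n a v B : (forall i, (i < n)%nat -> Rabs (v i) <= B) ->
  Rabs (ip n a v) <= norm1 n a * B.
Proof.
  induction n; intros H; simpl.
  - rewrite Rabs_R0; lra.
  - assert (IH := IHn (fun i Hi => H i ltac:(lia))).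
    specialize (H n (Nat.lt_succ_diag_r n)).
    eapply Rle_trans; [apply Rabs_triang|]. rewrite Rabs_mult.
    pose proof (Rabs_pos (a n)). nra.
Qed.

Lemma ip_self_le_sqr_norm1 n v : ip n v v <= norm1 n v * norm1 n v.
Proof.
  induction n; simpl; [lra|].
  pose proof (norm1_ge0 n v). pose proof (Rabs_pos (v n)).
  assert (v n * v n = Rabs (v n) * Rabs (v n)) by (rewrite <- Rabs_mult, Rabs_right; nra).
  nra.
Qed.

Lemma vdist_le_norm1 n x y : vdist n x y <= norm1 n (vadd x (vscale (-1) y)).
Proof.
  unfold vdist. rewrite <- (sqrt_square (norm1 n _)) by apply norm1_ge0.
  apply sqrt_le_1_alt, ip_self_le_sqr_norm1.
Qed.

Lemma vdist_single_coord n x y j : (forall i, i <> j -> y i = x i) ->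
  vdist n x y <= Rabs (x j - y j).
Proof.
  intros Hxy. eapply Rle_trans; [apply vdist_le_norm1|].
  replace (x j - y j) with (vadd x (vscale (-1) y) j) by (unfold vadd, vscale; ring).
  apply norm1_single_coord. intros i Hi. unfold vadd, vscale. rewrite Hxy by auto. ring.
Qed.

(** * Closures and tangent cones *)

Lemma closure_incl n (D : VSet) x : inRn n x -> D x -> closure n D x.
Proof.
  intros Hx Dx. split; auto. intros eps He. exists x. split; auto.
  unfold vdist. replace (vadd x (vscale (-1) x)) with vzero
    by (apply vext; intro i; unfold vzero, vadd, vscale; ring).
  rewrite ip_vzero, sqrt_0; auto.
Qed.

Lemma closure_ip_ge0 n a (D : VSet) x :
  (forall y, D y -> ip n a y >= 0) -> closure n D x -> ip n a x >= 0.
Proof.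
  intros HD [Hx Hc].
  destruct (Rlt_or_le (ip n a x) 0) as [Hlt|Hge]; [exfalso|lra].
  set (eta := - ip n a x). set (M := norm1 n a + 1).
  pose proof (norm1_ge0 n a).
  destruct (Hc (eta / M)) as [y [Dy Hd]].
  { unfold eta, M; apply Rdiv_lt_0_compat; lra. }
  specialize (HD y Dy).
  assert (Hb : Rabs (ip n a (vadd x (vscale (-1) y))) <= norm1 n a * (eta / M)).
  { apply ip_abs_le. intros i Hi.
    replace (vadd x (vscale (-1) y) i) with (x i - y i) by (unfold vadd, vscale; ring).
    pose proof (coord_le_vdist n x y i Hi); lra. }
  rewrite ip_vadd, ip_vscale in Hb.
  assert (Hs : norm1 n a * (eta / M) < eta).
  { apply Rmult_lt_reg_r with M; [unfold M; lra|]. unfold Rdiv.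
    rewrite Rmult_assoc, (Rmult_assoc eta), Rinv_l by (unfold M; lra). unfold M, eta; nra. }
  pose proof (Rle_abs (-(ip n a x + -1 * ip n a y))) as Habs. rewrite Rabs_Ropp in Habs.
  unfold eta in *. lra.
Qed.

Lemma closure3_lin (D : VSet) x p q r :
  (forall y, D y -> 0 <= p * y 0%nat + q * y 1%nat + r * y 2%nat) -> closure 3 D x ->
  0 <= p * x 0%nat + q * x 1%nat + r * x 2%nat.
Proof.
  intros H Hx. enough (ip 3 (vec3 p q r) x >= 0) by (simpl in *; lra).
  apply (closure_ip_ge0 3 _ D); auto. intros y Hy. specialize (H y Hy). simpl. lra.
Qed.

Lemma closure4_lin (D : VSet) x p q r u :
  (forall y, D y -> 0 <= p * y 0%nat + q * y 1%nat + r * y 2%nat + u * y 3%nat) ->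
  closure 4 D x -> 0 <= p * x 0%nat + q * x 1%nat + r * x 2%nat + u * x 3%nat.
Proof.
  intros H Hx. enough (ip 4 (vec4 p q r u) x >= 0) by (simpl in *; lra).
  apply (closure_ip_ge0 4 _ D); auto. intros y Hy. specialize (H y Hy). simpl. lra.
Qed.

Lemma closure_of_coord_approx n (D : VSet) x j M : inRn n x -> 0 <= M ->
  (forall k, 0 < k <= 1 -> exists y, D y /\ (forall i, i <> j -> y i = x i) /\
     Rabs (x j - y j) <= M * k) ->
  closure n D x.
Proof.
  intros Hx HM Happrox. split; auto. intros eps He.
  set (k := Rmin 1 (eps / (2 * (M + 1)))).
  assert (Hk : 0 < k <= 1).
  { split; [apply Rmin_pos; [lra|apply Rdiv_lt_0_compat; lra]|apply Rmin_l]. }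
  assert (HkM : k * (2 * (M + 1)) <= eps) by (apply mul_le_of_le_div; [lra|apply Rmin_r]).
  destruct (Happrox k Hk) as [y [Dy [Hy Hj]]]. exists y. split; auto.
  eapply Rle_lt_trans; [apply (vdist_single_coord n x y j Hy)|]. nra.
Qed.

Lemma tangent_of_feasible n x (D : VSet) d eps :
  inRn n d -> 0 < eps -> D (vadd x (vscale eps d)) -> tangent n x D d.
Proof. intros Hd He HD. apply closure_incl; auto. split; auto. exists eps; auto. Qed.

Lemma tangent_ip_ge0 n a beta x (D : VSet) d :
  (forall y, D y -> ip n a y >= beta) -> ip n a x = beta ->
  tangent n x D d -> ip n a d >= 0.
Proof.
  intros HD Hx Hd. eapply closure_ip_ge0; [|exact Hd].
  intros y [_ [eps [He Hy]]]. specialize (HD _ Hy).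
  rewrite ip_vadd, ip_vscale in HD. nra.
Qed.

(** * Convex hulls *)

Definition lscale (c : R) (l : list (R * Vec)) := map (fun p => (c * fst p, snd p)) l.

Lemma lincomb_app l1 l2 : lincomb (l1 ++ l2) = vadd (lincomb l1) (lincomb l2).
Proof.
  induction l1; simpl; [|rewrite IHl1]; apply vext; intro i; unfold vadd, vscale, vzero; ring.
Qed.

Lemma wsum_app l1 l2 : wsum (l1 ++ l2) = wsum l1 + wsum l2.
Proof. induction l1; simpl; [ring|]. rewrite IHl1; ring. Qed.

Lemma lincomb_lscale c l : lincomb (lscale c l) = vscale c (lincomb l).
Proof.
  induction l; simpl; [|rewrite IHl]; apply vext; intro i; unfold vadd, vscale, vzero; simpl; ring.
Qed.

Lemma wsum_lscale c l : wsum (lscale c l) = c * wsum l.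
Proof. induction l; simpl; [ring|]. rewrite IHl; ring. Qed.

Lemma Forall_lscale (P : Vec -> Prop) c l : 0 <= c ->
  Forall (fun p => 0 <= fst p /\ P (snd p)) l ->
  Forall (fun p => 0 <= fst p /\ P (snd p)) (lscale c l).
Proof.
  intros Hc H. induction H as [|[w e] l [Hw He]]; simpl; constructor; auto.
  simpl; split; auto. apply Rmult_le_pos; auto.
Qed.

Lemma conv_idem (S : VSet) x : conv (conv S) x -> conv S x.
Proof.
  intros [l [Hf [Hw ->]]].
  enough (H : exists l', Forall (fun p => 0 <= fst p /\ S (snd p)) l' /\
            wsum l' = wsum l /\ lincomb l = lincomb l').
  { destruct H as [l' [? [? ?]]]. exists l'. split; auto. split; congruence. }
  clear Hw. induction Hf as [|[w c] l [Hw0 Hc] Hf IH]; simpl in *.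
  - exists nil; simpl; auto.
  - destruct Hc as [lc [Hfc [Hwc ->]]]. destruct IH as [l' [Hf' [Hw' He']]].
    exists (lscale w lc ++ l'). split; [apply Forall_app; split; auto; apply Forall_lscale; auto|].
    rewrite wsum_app, wsum_lscale, lincomb_app, lincomb_lscale, Hwc, Hw', He'.
    split; [ring|reflexivity].
Qed.

Lemma conv_of_mem (S : VSet) x : S x -> conv S x.
Proof.
  intros H. exists ((1, x) :: nil). split; [constructor; simpl; auto; split; [lra|auto]|].
  split; simpl; [ring|]. apply vext; intro i; unfold vadd, vscale, vzero; ring.
Qed.

Lemma conv_comb (S : VSet) x y t : conv S x -> conv S y -> 0 <= t <= 1 ->
  conv S (vadd (vscale t x) (vscale (1 - t) y)).
Proof.
  intros Hx Hy Ht. apply conv_idem.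
  exists ((t, x) :: (1 - t, y) :: nil). split.
  - repeat (constructor; simpl; try (split; auto; lra)).
  - split; simpl; [ring|]. apply vext; intro i; unfold vadd, vscale, vzero; ring.
Qed.

Lemma ip_lincomb_ge n a (P : Vec -> Prop) beta l :
  Forall (fun p => 0 <= fst p /\ P (snd p)) l ->
  (forall e, P e -> ip n a e >= beta) ->
  ip n a (lincomb l) >= beta * wsum l.
Proof.
  intros Hf HP. induction Hf as [|[w e] l [H0 He] Hf IH]; simpl in *.
  - rewrite ip_vzero. lra.
  - rewrite ip_vadd, ip_vscale. specialize (HP e He). nra.
Qed.

Lemma conv_ip_ge n a beta (S : VSet) x :
  (forall g, S g -> ip n a g >= beta) -> conv S x -> ip n a x >= beta.
Proof.
  intros H [l [Hf [Hw ->]]]. pose proof (ip_lincomb_ge n a S beta l Hf H). rewrite Hw in H0. lra.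
Qed.

(** * The set C and the cone K *)

(* Points (c, s) = (cos t, sin t) of gamma_1 (at height 1) and of gamma_2 (at height -1). *)
Definition top_arc (c s : R) := c*c + s*s = 1 /\ 0 <= c /\ 0 <= s.
Definition bot_arc (c s : R) := c*c + s*s = 1 /\ 0 <= s.

Lemma acos_le_PI2 x : 0 <= x <= 1 -> acos x <= PI/2.
Proof.
  intros Hx. pose proof (acos_bound x). pose proof (cos_acos x ltac:(lra)).
  destruct (Rle_or_lt (acos x) (PI/2)) as [h|h]; auto.
  assert (cos (acos x) < 0) by (apply cos_lt_0; lra).
  destruct (Req_dec x 0) as [->|hx]; [rewrite acos_0 in h|]; lra.
Qed.

Lemma gamma12_top c s : top_arc c s -> gamma12 (vec3 c s 1).
Proof.
  intros [H1 [H2 H3]]. left. exists (acos c). split.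
  - pose proof (acos_bound c). split; [lra|]. apply acos_le_PI2; nra.
  - rewrite cos_acos, sin_acos by nra.
    replace (1 - c²) with (s*s) by (unfold Rsqr; lra). rewrite sqrt_square by lra. reflexivity.
Qed.

Lemma gamma12_bot c s : bot_arc c s -> gamma12 (vec3 c s (-1)).
Proof.
  intros [H1 H3]. right. exists (acos c). split; [apply acos_bound|].
  rewrite cos_acos, sin_acos by nra.
  replace (1 - c²) with (s*s) by (unfold Rsqr; lra). rewrite sqrt_square by lra. reflexivity.
Qed.

Lemma gamma12_inv g : gamma12 g -> exists c s,
  (top_arc c s /\ g = vec3 c s 1) \/ (bot_arc c s /\ g = vec3 c s (-1)).
Proof.
  pose proof PI_RGT_0.
  intros [[t [Ht ->]]|[t [Ht ->]]]; exists (cos t), (sin t);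
    pose proof (sin2_cos2 t); unfold Rsqr in *; [left|right]; repeat split; auto; try lra.
  - apply cos_ge_0; lra.
  - apply sin_ge_0; lra.
  - apply sin_ge_0; lra.
Qed.

Lemma C_of_top c s : top_arc c s -> C_ex (vec3 c s 1).
Proof. intros; apply conv_of_mem, gamma12_top; auto. Qed.

Lemma C_of_bot c s : bot_arc c s -> C_ex (vec3 c s (-1)).
Proof. intros; apply conv_of_mem, gamma12_bot; auto. Qed.

Lemma C_ip_ge a beta :
  (forall c s, top_arc c s -> ip 3 a (vec3 c s 1) >= beta) ->
  (forall c s, bot_arc c s -> ip 3 a (vec3 c s (-1)) >= beta) ->
  forall x, C_ex x -> ip 3 a x >= beta.
Proof.
  intros Ht Hb x. apply (conv_ip_ge 3 a beta gamma12). intros g Hg.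
  destruct (gamma12_inv g Hg) as [c [s [[H ->]|[H ->]]]]; auto.
Qed.

Lemma C_bot_half_disk x y : x*x + y*y <= 1 -> 0 <= y -> C_ex (vec3 x y (-1)).
Proof.
  intros H1 H2.
  set (r := sqrt (1 - y*y)).
  assert (Hr0 : 0 <= r) by apply sqrt_pos.
  assert (Hr2 : r * r = 1 - y*y) by (apply sqrt_sqrt; nra).
  assert (GA : C_ex (vec3 r y (-1))) by (apply C_of_bot; split; nra).
  assert (GB : C_ex (vec3 (-r) y (-1))) by (apply C_of_bot; split; nra).
  destruct (Req_dec r 0) as [Hr|Hr].
  - replace x with r by nra. exact GA.
  - set (t := (x + r) / (2 * r)).
    replace (vec3 x y (-1)) with (vadd (vscale t (vec3 r y (-1))) (vscale (1 - t) (vec3 (-r) y (-1))))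
      by (solve_vec_eq; unfold t; field; auto).
    apply conv_comb; auto. apply div_unit_interval; nra.
Qed.

Lemma C_top_cap x y : x*x + y*y <= 1 -> x + y >= 1 -> C_ex (vec3 x y 1).
Proof.
  intros H1 H2.
  assert (Hy0 : 0 <= y) by nra. assert (Hy : y <= 1) by nra.
  set (r := sqrt (1 - y*y)).
  assert (Hr0 : 0 <= r) by apply sqrt_pos.
  assert (Hr2 : r * r = 1 - y*y) by (apply sqrt_sqrt; nra).
  assert (Hxr : x <= r) by nra.
  assert (GA : C_ex (vec3 r y 1)) by (apply C_of_top; split; nra).
  assert (GPQ : C_ex (vec3 (1 - y) y 1)).
  { replace (vec3 (1 - y) y 1) with
      (vadd (vscale (1 - y) (vec3 1 0 1)) (vscale (1 - (1 - y)) (vec3 0 1 1))) by solve_vec_eq.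
    apply conv_comb; [apply C_of_top; split; lra|apply C_of_top; split; lra|lra]. }
  destruct (Req_dec (r - (1 - y)) 0) as [Hr|Hr].
  - replace x with r by lra. exact GA.
  - set (t := (x - (1 - y)) / (r - (1 - y))).
    replace (vec3 x y 1) with (vadd (vscale t (vec3 r y 1)) (vscale (1 - t) (vec3 (1 - y) y 1)))
      by (solve_vec_eq; unfold t; field; auto).
    apply conv_comb; auto. apply div_unit_interval; lra.
Qed.

Lemma C_cylinder x y h : x*x + y*y <= 1 -> x + y >= 1 -> -1 <= h <= 1 -> C_ex (vec3 x y h).
Proof.
  intros H1 H2 Hh.
  replace (vec3 x y h) with
    (vadd (vscale ((1 + h)/2) (vec3 x y 1)) (vscale (1 - (1 + h)/2) (vec3 x y (-1))))
    by (solve_vec_eq; field).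
  apply conv_comb; [apply C_top_cap; auto|apply C_bot_half_disk; nra|lra].
Qed.

Definition lift1 (c : Vec) : Vec := vec4 (c 0%nat) (c 1%nat) (c 2%nat) 1.

Lemma K_char w : K_ex w <-> exists lam c, 0 <= lam /\ C_ex c /\ w = vscale lam (lift1 c).
Proof.
  split.
  - intros [lam [s [Hl [[l [Hf [Hw ->]]] ->]]]]. exists lam.
    assert (H : exists l', Forall (fun p => 0 <= fst p /\ C_ex (snd p)) l' /\ wsum l' = wsum l /\
        lincomb l = vec4 (lincomb l' 0%nat) (lincomb l' 1%nat) (lincomb l' 2%nat) (wsum l)).
    { clear Hw. induction Hf as [|[w e] l [H0 He] Hf IH]; simpl in *.
      - exists nil; simpl; repeat split; auto. solve_vec_eq.
      - destruct He as [y [Hy ->]]. destruct IH as [l' [Hf' [Hw' He']]].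
        exists ((w, y) :: l'). split; [constructor; auto|]. simpl. split; [lra|].
        rewrite He'. solve_vec_eq. }
    destruct H as [l' [Hf' [Hw' He']]].
    exists (lincomb l'). split; auto. split.
    + apply conv_idem. exists l'. repeat split; auto; congruence.
    + rewrite He', Hw. reflexivity.
  - intros [lam [c [Hl [Hc ->]]]]. exists lam, (lift1 c). repeat split; auto.
    apply conv_of_mem. exists c; auto.
Qed.

Lemma K_of_C c : C_ex c -> K_ex (lift1 c).
Proof.
  intros Hc. apply K_char. exists 1, c. repeat split; auto; [lra|].
  apply vext; intro; unfold vscale; ring.
Qed.

Lemma K_scale mu w : 0 <= mu -> K_ex w -> K_ex (vscale mu w).
Proof.
  intros Hm Hw. apply K_char in Hw. destruct Hw as [lam [c [Hl [Hc ->]]]].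
  apply K_char. exists (mu * lam), c. split; [nra|]. split; auto.
  apply vext; intro i; unfold vscale; ring.
Qed.

Lemma K_add v w : K_ex v -> K_ex w -> K_ex (vadd v w).
Proof.
  intros Hv Hw. apply K_char in Hv, Hw.
  destruct Hv as [l1 [c1 [H1 [Hc1 ->]]]], Hw as [l2 [c2 [H2 [Hc2 ->]]]].
  apply K_char.
  destruct (Req_dec (l1 + l2) 0) as [Hz|Hz].
  - exists 0, c1. split; [lra|]. split; auto.
    replace l1 with 0 by lra. replace l2 with 0 by lra.
    apply vext; intro i; unfold vadd, vscale; ring.
  - exists (l1 + l2), (vadd (vscale (l1/(l1+l2)) c1) (vscale (1 - l1/(l1+l2)) c2)).
    split; [lra|]. split.
    + apply conv_comb; auto. apply div_unit_interval; lra.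
    + unfold lift1; solve_vec_eq; field; auto.
Qed.

Lemma K_ip_ge0_of_C a beta : (forall c, C_ex c -> ip 3 a c >= beta) ->
  forall w, K_ex w -> ip 4 (vec4 (a 0%nat) (a 1%nat) (a 2%nat) (- beta)) w >= 0.
Proof.
  intros Ha w Hw. apply K_char in Hw. destruct Hw as [lam [c [Hl [Hc ->]]]].
  specialize (Ha c Hc). rewrite ip_vscale. simpl in *. nra.
Qed.

Lemma K_top_cap x y : x*x + y*y <= 1 -> x + y >= 1 -> K_ex (vec4 x y 1 1).
Proof. intros. apply (K_of_C (vec3 x y 1)), C_top_cap; auto. Qed.

Lemma K_bot_half_disk x y : x*x + y*y <= 1 -> 0 <= y -> K_ex (vec4 x y (-1) 1).
Proof. intros. apply (K_of_C (vec3 x y (-1))), C_bot_half_disk; auto. Qed.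

Lemma nonneg_of_small_k p q : (forall k, 0 < k <= 1 -> 0 <= 2*k*p - k*k*q) -> q <= 0 -> 0 <= p.
Proof.
  intros H Hq. destruct (Rlt_or_le p 0) as [Hp|Hp]; [exfalso|lra].
  set (k := Rmin 1 (-p / (1 - q))).
  assert (Hk : 0 < k <= 1).
  { split; [apply Rmin_pos; [lra|apply Rdiv_lt_0_compat; lra]|apply Rmin_l]. }
  assert (Hkq : k * (1 - q) <= -p) by (apply mul_le_of_le_div; [lra|apply Rmin_r]).
  specialize (H k Hk). nra.
Qed.

(** * The tangent cones of C at xbar and of K at pbar *)

Definition pbar : Vec := lift1 xbar.
Definition T_C : VSet := tangent 3 xbar C_ex.
Definition T_K : VSet := tangent 4 pbar K_ex.

Definition supports_at_xbar (a : Vec) : Prop := forall c, C_ex c -> ip 3 a c >= ip 3 a xbar.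

(* The first three coordinates of d - d_3 pbar; through it T_K is read inside T_C. *)
Definition dehomog (d : Vec) : Vec := vec3 (d 0%nat) (d 1%nat - d 3%nat) (d 2%nat - d 3%nat).

Lemma T_C_ip_ge0 a d : supports_at_xbar a -> T_C d -> ip 3 a d >= 0.
Proof. intros Ha. apply (tangent_ip_ge0 3 a (ip 3 a xbar) xbar C_ex); auto. Qed.

Lemma T_K_ip_ge0 a d : supports_at_xbar a -> T_K d -> ip 3 a (dehomog d) >= 0.
Proof.
  intros Ha Hd.
  enough (ip 4 (vec4 (a 0%nat) (a 1%nat) (a 2%nat) (- ip 3 a xbar)) d >= 0) by (simpl in *; lra).
  apply (tangent_ip_ge0 4 _ 0 pbar K_ex); auto.
  - apply K_ip_ge0_of_C; auto.
  - simpl. ring.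
Qed.

(* Three families of supporting functionals of C at xbar; the third comes from the tangent
   lines of the lower half circle at (-2k, 1 - k^2)/(1 + k^2). *)
Definition tangent_cut (d : Vec) : Prop :=
  d 1%nat <= 0 /\ d 2%nat <= 0 /\
  forall k, 0 < k <= 1 -> 0 <= 2*k * d 0%nat - (1 - k*k) * d 1%nat - k*k * d 2%nat.

Lemma tangent_cut_of_supports d : (forall a, supports_at_xbar a -> ip 3 a d >= 0) -> tangent_cut d.
Proof.
  intros H. split; [|split].
  - enough (ip 3 (vec3 0 (-1) 0) d >= 0) by (simpl in *; lra).
    apply H. intros c Hc. apply (C_ip_ge (vec3 0 (-1) 0)); auto; intros x y Hxy;
      destruct Hxy; simpl; nra.
  - enough (ip 3 (vec3 0 0 (-1)) d >= 0) by (simpl in *; lra).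
    apply H. intros c Hc. apply (C_ip_ge (vec3 0 0 (-1))); auto; intros x y Hxy; simpl; lra.
  - intros k Hk. enough (ip 3 (vec3 (2*k) (-(1-k*k)) (-(k*k))) d >= 0) by (simpl in *; lra).
    apply H. intros c Hc. apply (C_ip_ge (vec3 (2*k) (-(1-k*k)) (-(k*k)))); auto;
      intros x y Hxy; simpl.
    + destruct Hxy as [H1 [H2 H3]].
      assert (0 <= (1-k*k)*(1-y)) by (apply Rmult_le_pos; nra).
      assert (0 <= k*x) by nra. lra.
    + (* Cauchy-Schwarz against (-2k, 1 - k^2), whose norm is 1 + k^2 *)
      destruct Hxy as [H1 H2].
      assert (((1-k*k)*y - 2*k*x) * ((1-k*k)*y - 2*k*x) <= (1+k*k)*(1+k*k))
        by (pose proof (Rle_0_sqr ((1-k*k)*x + 2*k*y)); unfold Rsqr in *; nra).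
      assert ((1-k*k)*y - 2*k*x <= 1 + k*k) by nra.
      nra.
Qed.

Lemma T_C_cut d : T_C d -> tangent_cut d.
Proof. intros Hd. apply tangent_cut_of_supports. intros a Ha. apply T_C_ip_ge0; auto. Qed.

Lemma T_K_cut d : T_K d -> tangent_cut (dehomog d).
Proof. intros Hd. apply tangent_cut_of_supports. intros a Ha. apply T_K_ip_ge0; auto. Qed.

Lemma tangent_cut_extreme y z t : tangent_cut y -> tangent_cut z -> 0 < t < 1 ->
  (1 - t) * y 1%nat + t * z 1%nat = 0 ->
  y 1%nat = 0 /\ z 1%nat = 0 /\ 0 <= y 0%nat /\ 0 <= z 0%nat.
Proof.
  intros [Y1 [Y2 Y3]] [Z1 [Z2 Z3]] Ht Hc.
  assert (y 1%nat = 0) by nra. assert (z 1%nat = 0) by nra.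
  repeat split; auto; [apply (nonneg_of_small_k _ (y 2%nat))|apply (nonneg_of_small_k _ (z 2%nat))];
    auto; intros k Hk; [specialize (Y3 k Hk)|specialize (Z3 k Hk)]; nra.
Qed.

Lemma T_C_of_feasible d eps : inRn 3 d -> 0 < eps -> C_ex (vadd xbar (vscale eps d)) -> T_C d.
Proof. apply tangent_of_feasible. Qed.

Lemma T_C_e1 : T_C (vec3 1 0 0).
Proof.
  apply (closure_of_coord_approx 3 _ _ 1 1); [apply inRn_vec3|lra|]. intros k Hk.
  exists (vec3 1 (-k) 0). split; [|split].
  - split; [apply inRn_vec3|]. exists (2*k/(1+k*k)). split; [apply Rdiv_lt_0_compat; nra|].
    replace (vadd xbar (vscale (2 * k / (1 + k * k)) (vec3 1 (- k) 0)))
      with (vec3 (2*k/(1+k*k)) ((1-k*k)/(1+k*k)) 1) by (unfold xbar; solve_vec_eq; field; nra).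
    apply C_of_top. split; [field; nra|].
    split; apply Rmult_le_pos; try nra; left; apply Rinv_0_lt_compat; nra.
  - intros [|[|[|i]]] Hi; simpl; auto; lia.
  - simpl. replace (0 - - k) with k by ring. rewrite Rabs_right; lra.
Qed.

Lemma T_C_lower k sg : 0 < k <= 1 -> sg * sg = 1 -> T_C (vec3 (sg * 2 * k) (-2*k*k) (-2*(1+k*k))).
Proof.
  intros Hk Hsg. apply (T_C_of_feasible _ (/(1+k*k))); [apply inRn_vec3|apply Rinv_0_lt_compat; nra|].
  replace (vadd xbar (vscale (/ (1 + k * k)) (vec3 (sg * 2 * k) (-2*k*k) (-2*(1+k*k)))))
    with (vec3 (sg * 2*k/(1+k*k)) ((1-k*k)/(1+k*k)) (-1)) by (unfold xbar; solve_vec_eq; field; nra).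
  apply C_of_bot. split.
  - field_simplify; [|nra]. replace (sg ^ 2) with 1 by (simpl; lra). field; nra.
  - apply Rmult_le_pos; [nra|]. left; apply Rinv_0_lt_compat; nra.
Qed.

Definition ray_down : VSet := fun d => inRn 3 d /\ d 0%nat = 0 /\ d 1%nat = 0 /\ d 2%nat <= 0.

Lemma ray_down_face : face 3 T_C ray_down.
Proof.
  split; [|split; [|split]].
  - intros x Hx. split; [apply Hx|].
    assert (G : forall p q r, (forall y, ray_down y -> 0 <= p * y 0%nat + q * y 1%nat + r * y 2%nat) ->
      0 <= p * x 0%nat + q * x 1%nat + r * x 2%nat) by (intros; apply closure3_lin with ray_down; auto).
    pose proof (G 1 0 0 ltac:(intros y [_ [? [? ?]]]; nra)).
    pose proof (G (-1) 0 0 ltac:(intros y [_ [? [? ?]]]; nra)).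
    pose proof (G 0 1 0 ltac:(intros y [_ [? [? ?]]]; nra)).
    pose proof (G 0 (-1) 0 ltac:(intros y [_ [? [? ?]]]; nra)).
    pose proof (G 0 0 (-1) ltac:(intros y [_ [? [? ?]]]; nra)).
    repeat split; lra.
  - intros x y t [Hx [X0 [X1 X2]]] [Hy [Y0 [Y1 Y2]]] Ht.
    unfold vadd, vscale. repeat split; try nra.
    intros i Hi. rewrite Hx, Hy by auto. ring.
  - intros d [Hd [D0 [D1 D2]]].
    apply (T_C_of_feasible d (/(1 - d 2%nat))); auto; [apply Rinv_0_lt_compat; lra|].
    replace (vadd xbar (vscale (/ (1 - d 2%nat)) d)) with (vec3 0 1 (1 + d 2%nat / (1 - d 2%nat)))
      by (rewrite (vec3_eta d Hd), D0, D1; unfold xbar; solve_vec_eq; field; lra).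
    apply C_cylinder; try lra.
    assert (0 <= - d 2%nat / (1 - d 2%nat) <= 1) by (apply div_unit_interval; lra).
    unfold Rdiv in *. lra.
  - intros x y z [Hx [X0 [X1 X2]]] Hy Hz [t [Ht Hxe]].
    assert (E1 : (1 - t) * y 1%nat + t * z 1%nat = 0) by (rewrite Hxe in X1; exact X1).
    assert (E0 : (1 - t) * y 0%nat + t * z 0%nat = 0) by (rewrite Hxe in X0; exact X0).
    pose proof (T_C_cut y Hy) as Cy. pose proof (T_C_cut z Hz) as Cz.
    destruct (tangent_cut_extreme y z t Cy Cz Ht E1) as [? [? [? ?]]].
    destruct Cy as [_ [? _]], Cz as [_ [? _]], Hy as [Iy _], Hz as [Iz _].
    split; repeat split; auto; nra.
Qed.

Lemma T_C_not_facially_exposed : ~ facially_exposed 3 T_C.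
Proof.
  intro H. specialize (H ray_down ray_down_face).
  assert (R0 : ray_down (vec3 0 0 0)) by (repeat split; simpl; try lra; apply inRn_vec3).
  assert (Hneq : ~ set_eq ray_down T_C).
  { intro E. assert (Hd : T_C (vec3 1 (-1) 0)).
    { apply (T_C_of_feasible _ 1); [apply inRn_vec3|lra|].
      replace (vadd xbar (vscale 1 (vec3 1 (-1) 0))) with (vec3 1 0 1) by (unfold xbar; solve_vec_eq).
      apply C_of_top; split; lra. }
    apply E in Hd. destruct Hd as [_ [? _]]. simpl in *. lra. }
  destruct (H (ex_intro _ _ R0) Hneq) as [a [b [_ [_ [Hge Hiff]]]]].
  destruct (proj1 (Hiff _) R0) as [_ Hb]. simpl in Hb.
  assert (R1 : ray_down (vec3 0 0 (-1))) by (repeat split; simpl; try lra; apply inRn_vec3).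
  destruct (proj1 (Hiff _) R1) as [_ Ha2]. simpl in Ha2.
  assert (Hlow : forall sg, sg * sg = 1 -> forall k, 0 < k <= 1 ->
                   0 <= 2*k*(sg * a 0%nat) - k*k*(2 * a 1%nat)).
  { intros sg Hsg k Hk. pose proof (Hge _ (T_C_lower k sg Hk Hsg)). simpl in *. nra. }
  assert (Ha1 : 2 * a 1%nat <= 0).
  { pose proof (Hlow 1 ltac:(lra) 1 ltac:(lra)). pose proof (Hlow (-1) ltac:(lra) 1 ltac:(lra)). lra. }
  pose proof (nonneg_of_small_k _ _ (Hlow 1 ltac:(lra)) Ha1).
  pose proof (nonneg_of_small_k _ _ (Hlow (-1) ltac:(lra)) Ha1).
  destruct (proj2 (Hiff (vec3 1 0 0))) as [_ [? _]]; [split; [apply T_C_e1|simpl; nra]|].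
  simpl in *. lra.
Qed.

Lemma K_pbar : K_ex pbar.
Proof. apply K_of_C, C_of_top. split; lra. Qed.

Definition wedge : VSet := fun d => inRn 4 d /\ d 1%nat = d 3%nat /\ 0 <= d 0%nat /\ d 2%nat <= d 3%nat.

(* Directions of the wedge with d0 > 0 are only reached as limits: from pbar one moves
   tilted by k towards the upper arc, and the tilt k tends to 0. *)
Lemma wedge_sub_T_K d : wedge d -> T_K d.
Proof.
  intros [Hd [H13 [H0 H23]]].
  set (x := d 0%nat). set (s := d 1%nat). set (m := s - d 2%nat).
  assert (Hm : 0 <= m) by (unfold m, s; lra).
  apply (closure_of_coord_approx 4 _ _ 1 x); auto. intros k Hk.
  exists (vec4 x (s - k * x) (d 2%nat) s). split; [|split].
  - split; [apply inRn_vec4|].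
    set (delta := k / (x + m + Rabs s + 1)).
    pose proof (Rabs_pos s). pose proof (Rle_abs s).
    assert (Hden : 0 < x + m + Rabs s + 1) by (unfold x; lra).
    assert (Hdel : 0 < delta) by (apply Rdiv_lt_0_compat; lra).
    assert (Hdd : delta * (x + m + Rabs s + 1) = k) by (unfold delta; field; lra).
    assert (Hx : 0 <= delta * x) by (apply Rmult_le_pos; unfold x; lra).
    assert (Hmm : 0 <= delta * m) by (apply Rmult_le_pos; lra).
    assert (Hsa : delta * s <= delta * Rabs s) by (apply Rmult_le_compat_l; lra).
    assert (Hsa0 : 0 <= delta * Rabs s) by (apply Rmult_le_pos; lra).
    assert (Hdx : delta * x <= k) by lra.
    assert (Hdm : delta * m <= k) by lra.
    assert (Hds : delta * s < 1) by lra.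
    exists (delta / (1 - delta * s)). split; [apply Rdiv_lt_0_compat; lra|].
    replace (vadd pbar (vscale (delta / (1 - delta * s)) (vec4 x (s - k * x) (d 2%nat) s)))
      with (vscale (/ (1 - delta * s)) (lift1 (vec3 (delta * x) (1 - delta * k * x) (1 - delta * m))))
      by (unfold pbar, lift1, xbar, m; solve_vec_eq; field; lra).
    apply K_scale; [left; apply Rinv_0_lt_compat; lra|].
    replace (delta * k * x) with (k * (delta * x)) by ring.
    set (u := delta * x) in *.
    assert (Hu : u * (1 + k*k) <= 2*k).
    { assert (0 <= (k - u) * (1 + k*k)) by (apply Rmult_le_pos; nra). nra. }
    assert (u * (u * (1 + k*k)) <= u * (2*k)) by (apply Rmult_le_compat_l; lra).
    apply K_of_C, C_cylinder; nra.
  - intros i Hi. rewrite (vec4_eta d Hd).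
    destruct i as [|[|[|[|i]]]]; simpl; auto. lia.
  - simpl. unfold s, x. replace (d 1%nat - (d 1%nat - k * d 0%nat)) with (k * d 0%nat) by ring.
    rewrite Rabs_right; [nra|]. apply Rle_ge, Rmult_le_pos; lra.
Qed.

Lemma wedge_face : face 4 T_K wedge.
Proof.
  split; [|split; [|split]].
  - intros x Hx. split; [apply Hx|].
    assert (G : forall p q r u, (forall y, wedge y ->
        0 <= p * y 0%nat + q * y 1%nat + r * y 2%nat + u * y 3%nat) ->
        0 <= p * x 0%nat + q * x 1%nat + r * x 2%nat + u * x 3%nat)
      by (intros; apply closure4_lin with wedge; auto).
    pose proof (G 1 0 0 0 ltac:(intros y [_ [? [? ?]]]; nra)).
    pose proof (G 0 1 0 (-1) ltac:(intros y [_ [? [? ?]]]; nra)).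
    pose proof (G 0 (-1) 0 1 ltac:(intros y [_ [? [? ?]]]; nra)).
    pose proof (G 0 0 (-1) 1 ltac:(intros y [_ [? [? ?]]]; nra)).
    repeat split; lra.
  - intros x y t [Hx [X1 [X0 X2]]] [Hy [Y1 [Y0 Y2]]] Ht.
    unfold vadd, vscale. repeat split; try nra.
    intros i Hi. rewrite Hx, Hy by auto. ring.
  - apply wedge_sub_T_K.
  - intros x y z [Hx [X1 [X0 X2]]] Hy Hz [t [Ht Hxe]].
    assert (E1 : (1 - t) * dehomog y 1%nat + t * dehomog z 1%nat = 0)
      by (simpl; rewrite Hxe in X1; unfold vadd, vscale in X1; lra).
    pose proof (T_K_cut y Hy) as Cy. pose proof (T_K_cut z Hz) as Cz.
    destruct (tangent_cut_extreme _ _ t Cy Cz Ht E1) as [? [? [? ?]]].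
    destruct Cy as [_ [? _]], Cz as [_ [? _]], Hy as [Iy _], Hz as [Iz _].
    simpl in *. split; repeat split; auto; lra.
Qed.

(* In the wedge the direction -e1 is blocked at q, but in T_K it is reachable from q
   by following the lower half circle. *)
Lemma T_K_not_tangentially_exposed : ~ tangentially_exposed 4 T_K.
Proof.
  intro H.
  set (q := vec4 0 0 (-1) 0).
  assert (Wq : wedge q) by (repeat split; simpl; try lra; apply inRn_vec4).
  assert (Wne : ~ set_eq wedge T_K).
  { intro E. assert (Hd : T_K (vec4 1 (-1) 0 0)).
    { apply (tangent_of_feasible _ _ _ _ 1); [apply inRn_vec4|lra|].
      replace (vadd pbar (vscale 1 (vec4 1 (-1) 0 0))) with (lift1 (vec3 1 0 1))
        by (unfold pbar, lift1, xbar; solve_vec_eq).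
      apply K_of_C, C_of_top. split; lra. }
    apply E in Hd. destruct Hd as [_ [? _]]. simpl in *. lra. }
  destruct (H wedge q wedge_face Wne Wq (vec4 (-1) 0 0 0)) as [Hto _].
  assert (Hblocked : ~ tangent 4 q wedge (vec4 (-1) 0 0 0)).
  { intro Ht. enough (ip 4 (vec4 1 0 0 0) (vec4 (-1) 0 0 0) >= 0) by (simpl in *; lra).
    apply (tangent_ip_ge0 4 _ 0 q wedge); auto.
    - intros y [_ [_ [? _]]]. simpl. lra.
    - simpl. ring. }
  apply Hblocked, Hto. split.
  - apply (closure_of_coord_approx 4 _ _ 1 1); [apply inRn_vec4|lra|]. intros k Hk.
    exists (vec4 (-1) (-k) 0 0). split; [|split].
    + split; [apply inRn_vec4|]. exists (k / (1 + k*k)). split; [apply Rdiv_lt_0_compat; nra|].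
      apply (tangent_of_feasible _ _ _ _ 2); [apply inRn_vadd, inRn_vscale; apply inRn_vec4|lra|].
      replace (vadd pbar (vscale 2 (vadd q (vscale (k / (1 + k * k)) (vec4 (-1) (- k) 0 0)))))
        with (lift1 (vec3 (-2*k/(1+k*k)) ((1-k*k)/(1+k*k)) (-1)))
        by (unfold pbar, lift1, xbar, q; solve_vec_eq; field; nra).
      apply K_of_C, C_of_bot. split; [field; nra|].
      apply Rmult_le_pos; [nra|]. left; apply Rinv_0_lt_compat; nra.
    + intros [|[|[|[|i]]]] Hi; simpl; auto; lia.
    + simpl. replace (0 - - k) with k by ring. rewrite Rabs_right; lra.
  - exists ((-1, vec4 1 0 0 0) :: nil). split.
    + constructor; [|constructor]. repeat split; simpl; try lra. apply inRn_vec4.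
    + solve_vec_eq.
Qed.

Lemma K_not_strongly_tangentially_exposed : ~ strongly_tangentially_exposed 4 K_ex.
Proof.
  intros [_ H]. exact (T_K_not_tangentially_exposed (H T_K (lex_base 4 K_ex pbar K_pbar))).
Qed.

(** * Faces of convex cones *)

Section ConeFaces.
Variables (n : nat) (K F : VSet).
Hypothesis K_scale_closed : forall mu w, 0 <= mu -> K w -> K (vscale mu w).
Hypothesis K_add_closed : forall v w, K v -> K w -> K (vadd v w).
Hypothesis K_has_zero : K vzero.
Hypothesis F_face : face n K F.

Lemma face_sub w : F w -> K w.
Proof. destruct F_face as [_ [_ [H _]]]; auto. Qed.

Lemma face_extreme w y z t : F w -> K y -> K z -> 0 < t < 1 ->
  w = vadd (vscale (1 - t) y) (vscale t z) -> F y /\ F z.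
Proof. intros Hw Hy Hz Ht He. destruct F_face as [_ [_ [_ H]]]. apply (H w); auto. exists t; auto. Qed.

Lemma face_conv y z t : F y -> F z -> 0 <= t <= 1 -> F (vadd (vscale (1 - t) y) (vscale t z)).
Proof. destruct F_face as [_ [Hc _]]. auto. Qed.

Lemma face_scale mu w : 0 <= mu -> F w -> F (vscale mu w).
Proof.
  intros Hm Hw. pose proof (face_sub w Hw) as Kw.
  destruct (Req_dec mu 1) as [->|Hne].
  { replace (vscale 1 w) with w; auto. apply vext; intro; unfold vscale; ring. }
  destruct (Rlt_le_dec mu 1) as [H1|H1].
  - apply (face_extreme w (vscale mu w) (vscale (2 - mu) w) (1/2));
      [exact Hw|apply K_scale_closed; auto|apply K_scale_closed; auto; lra|lra|].
    apply vext; intro; unfold vadd, vscale; field.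
  - assert (0 < /mu < 1)
      by (split; [apply Rinv_0_lt_compat|rewrite <- Rinv_1; apply Rinv_lt_contravar]; lra).
    apply (face_extreme w vzero (vscale mu w) (/mu));
      [exact Hw|exact K_has_zero|apply K_scale_closed; auto; lra|lra|].
    apply vext; intro; unfold vadd, vscale, vzero; field; lra.
Qed.

Lemma face_add y z : F y -> F z -> F (vadd y z).
Proof.
  intros Hy Hz.
  replace (vadd y z) with (vadd (vscale (1 - 1/2) (vscale 2 y)) (vscale (1/2) (vscale 2 z)))
    by (apply vext; intro; unfold vadd, vscale; field).
  apply face_conv; try apply face_scale; auto; lra.
Qed.

Lemma face_of_push w g lam : 0 < lam -> F w -> K g ->
  K (vadd (vscale (1 + lam) w) (vscale (- lam) g)) -> F g.
Proof.
  intros Hl Hw Hg Hp.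
  apply (face_extreme w (vadd (vscale (1 + lam) w) (vscale (- lam) g)) g (lam / (1 + lam))); auto.
  - split; [apply Rdiv_lt_0_compat; lra|].
    apply Rmult_lt_reg_r with (1 + lam); [lra|]. unfold Rdiv. rewrite Rmult_assoc, Rinv_l; lra.
  - apply vext; intro; unfold vadd, vscale; field; lra.
Qed.

Lemma face_lincomb l : F vzero -> Forall (fun p => 0 <= fst p /\ F (snd p)) l -> F (lincomb l).
Proof.
  intros H0. induction 1 as [|[a e] l [Ha He] Hf IH]; simpl; auto.
  apply face_add; auto. apply face_scale; auto.
Qed.

Lemma cone_lincomb l : Forall (fun p => 0 <= fst p /\ K (snd p)) l -> K (lincomb l).
Proof. induction 1 as [|[a e] l [H0 He] Hf IH]; simpl; auto. Qed.

Lemma face_lincomb_inv l : Forall (fun p => 0 <= fst p /\ K (snd p)) l -> F (lincomb l) ->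
  Forall (fun p => fst p = 0 \/ F (snd p)) l.
Proof.
  induction 1 as [|[a e] l [H0 He] Hf IH]; simpl; intros Hw; [constructor|].
  assert (Hsplit : F (vscale 2 (vscale a e)) /\ F (vscale 2 (lincomb l))).
  { apply (face_extreme _ _ _ (1/2) Hw);
      [apply K_scale_closed; [lra|apply K_scale_closed; auto]
      |apply K_scale_closed; [lra|apply cone_lincomb; auto]
      |lra
      |apply vext; intro; unfold vadd, vscale; field]. }
  destruct Hsplit as [A B]. constructor.
  - simpl in *. destruct H0 as [Ha|<-]; [right|left; auto].
    replace e with (vscale (/(2*a)) (vscale 2 (vscale a e)))
      by (apply vext; intro; unfold vscale; field; lra).
    apply face_scale; auto. left; apply Rinv_0_lt_compat; lra.
  - apply IH.
    replace (lincomb l) with (vscale (1/2) (vscale 2 (lincomb l)))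
      by (apply vext; intro; unfold vscale; field).
    apply face_scale; auto; lra.
Qed.

Lemma face_ip_ge0_of_closure x w :
  closure n (msum (dual n K) (perp n F)) x -> F w -> ip n x w >= 0.
Proof.
  intros Hx Hw. rewrite ip_sym. eapply (closure_ip_ge0 n w _ x); [|exact Hx].
  intros y [a [b [[_ Ha] [[_ Hb] ->]]]].
  rewrite ip_vadd, (ip_sym n w a), (ip_sym n w b).
  specialize (Ha w (face_sub w Hw)). specialize (Hb w Hw). lra.
Qed.
End ConeFaces.

(** * Faces of K and the arc points they contain *)

Lemma K_zero : K_ex vzero.
Proof.
  replace vzero with (vscale 0 pbar) by (apply vext; intro; unfold vscale, vzero; ring).
  apply K_scale; [lra|apply K_pbar].
Qed.

Definition top_in (F : VSet) (c s : R) : Prop := top_arc c s /\ F (vec4 c s 1 1).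
Definition bot_in (F : VSet) (c s : R) : Prop := bot_arc c s /\ F (vec4 c s (-1) 1).
Definition all_top_in (F : VSet) : Prop := forall c s, top_arc c s -> top_in F c s.
Definition all_bot_in (F : VSet) : Prop := forall c s, bot_arc c s -> bot_in F c s.

Lemma top_in_arc F c s : top_in F c s -> top_arc c s.
Proof. intros [H _]; exact H. Qed.

Lemma bot_in_arc F c s : bot_in F c s -> bot_arc c s.
Proof. intros [H _]; exact H. Qed.

Definition arc_lift (p : Vec) : Prop :=
  exists c s, (top_arc c s /\ p = vec4 c s 1 1) \/ (bot_arc c s /\ p = vec4 c s (-1) 1).

Lemma K_of_arc_lift p : arc_lift p -> K_ex p.
Proof.
  intros [c [s [[H ->]|[H ->]]]];
    [apply (K_of_C (vec3 c s 1)), C_of_top|apply (K_of_C (vec3 c s (-1))), C_of_bot]; auto.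
Qed.

Lemma K_as_lincomb w : K_ex w ->
  exists l, Forall (fun p => 0 <= fst p /\ arc_lift (snd p)) l /\ w = lincomb l.
Proof.
  intros Hw. apply K_char in Hw. destruct Hw as [lam [c [Hl [[l [Hf [Hs ->]]] ->]]]].
  exists (map (fun p => (lam * fst p, lift1 (snd p))) l). split.
  - clear Hs. induction Hf as [|[a g] l [Ha Hg] Hf IH]; simpl; constructor; auto.
    simpl in *. split; [nra|].
    destruct (gamma12_inv g Hg) as [c [s [[H ->]|[H ->]]]]; exists c, s; auto.
  - enough (E : lincomb (map (fun p => (lam * fst p, lift1 (snd p))) l) =
      vscale lam (vec4 (lincomb l 0%nat) (lincomb l 1%nat) (lincomb l 2%nat) (wsum l)))
      by (rewrite E, Hs; reflexivity).
    clear Hf Hs. induction l as [|[a e] l IH]; simpl; [|rewrite IH]; unfold lift1; solve_vec_eq.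
Qed.

Section FacesOfK.
Variable F : VSet.
Hypothesis F_face : face 4 K_ex F.

Lemma K_face_ip_zero f :
  (forall c s, top_in F c s -> ip 4 f (vec4 c s 1 1) = 0) ->
  (forall c s, bot_in F c s -> ip 4 f (vec4 c s (-1) 1) = 0) ->
  forall w, F w -> ip 4 f w = 0.
Proof.
  intros Ht Hb w Hw. destruct (K_as_lincomb w (face_sub 4 K_ex F F_face w Hw)) as [l [Hl ->]].
  assert (Hz := face_lincomb_inv 4 K_ex F K_scale K_add K_zero F_face l).
  assert (Hl' : Forall (fun p => 0 <= fst p /\ K_ex (snd p)) l)
    by (eapply Forall_impl; [|exact Hl]; intros p [? ?]; auto using K_of_arc_lift).
  specialize (Hz Hl' Hw). clear Hw Hl'.
  induction l as [|[a p] l IH]; [apply ip_vzero|]. simpl lincomb.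
  inversion Hl as [|? ? [_ Hp] Hl2]; inversion Hz as [|? ? Hzp Hz2]; subst.
  rewrite ip_vadd, ip_vscale, IH by auto. simpl in *.
  destruct Hzp as [->|Fp]; [ring|].
  destruct Hp as [c [s [[H ->]|[H ->]]]]; [rewrite Ht|rewrite Hb]; try split; auto; ring.
Qed.

Lemma K_face_all_arcs : all_top_in F -> all_bot_in F -> set_eq F K_ex.
Proof.
  intros AT AB w. split; [apply (face_sub 4 K_ex F F_face)|]. intros Kw.
  assert (F0 : F vzero).
  { replace vzero with (vscale 0 (vec4 1 0 1 1)) by (apply vext; intro; unfold vscale, vzero; ring).
    apply (face_scale 4 K_ex F K_scale K_zero F_face); [lra|]. apply AT. split; lra. }
  destruct (K_as_lincomb w Kw) as [l [Hl ->]].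
  apply (face_lincomb 4 K_ex F K_scale K_zero F_face); auto.
  eapply Forall_impl; [|exact Hl]. intros p [Hp [c [s [[H ->]|[H ->]]]]]; split; auto;
    [apply AT|apply AB]; auto.
Qed.
End FacesOfK.

(** * Arc points forcing a face to be large *)

Definition near0 (P : R -> Prop) : Prop := exists e0, 0 < e0 /\ forall e, 0 < e <= e0 -> P e.

Lemma near0_and (P Q : R -> Prop) : near0 P -> near0 Q -> near0 (fun e => P e /\ Q e).
Proof.
  intros [e1 [H1 P1]] [e2 [H2 P2]]. exists (Rmin e1 e2). split; [apply Rmin_pos; auto|].
  intros e He. pose proof (Rmin_l e1 e2). pose proof (Rmin_r e1 e2).
  split; [apply P1|apply P2]; lra.
Qed.

Lemma near0_witness (P : R -> Prop) : near0 P -> exists e, 0 < e /\ P e.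
Proof. intros [e0 [H0 P0]]. exists e0. split; auto. apply P0. lra. Qed.

Lemma quad_near0 A B C : 0 < A \/ (A = 0 /\ 0 < B) -> near0 (fun e => 0 < A + B*e + C*e*e).
Proof.
  pose proof (Rabs_pos B). pose proof (Rabs_pos C).
  pose proof (Rle_abs B). pose proof (Rle_abs (-B)). pose proof (Rle_abs (-C)).
  rewrite Rabs_Ropp in *.
  intros [HA|[-> HB]].
  - assert (Hn : near0 (fun e => e <= 1 /\ e * (Rabs B + Rabs C + 1) <= A)).
    { apply near0_and; [exists 1; split; [lra|]; intros; lra|].
      exists (A / (Rabs B + Rabs C + 1)). split; [apply Rdiv_lt_0_compat; lra|].
      intros e He. apply mul_le_of_le_div; lra. }
    destruct Hn as [e0 [He0 Hn]]. exists e0. split; auto. intros e He.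
    destruct (Hn e He) as [He1 HeA].
    assert (- Rabs B * e <= B * e) by nra.
    assert (0 <= (C + Rabs C) * (e * e)) by (apply Rmult_le_pos; nra).
    assert (Rabs C * (e * e) <= Rabs C * e) by (apply Rmult_le_compat_l; nra).
    nra.
  - exists (B / (Rabs C + 1)). split; [apply Rdiv_lt_0_compat; lra|].
    intros e He. assert (e * (Rabs C + 1) <= B) by (apply mul_le_of_le_div; lra).
    assert (0 <= (C + Rabs C) * (e * e)) by (apply Rmult_le_pos; nra).
    assert (0 < e * (B - Rabs C * e)) by (apply Rmult_lt_0_compat; nra).
    nra.
Qed.

Lemma top_arc_sum_ge1 c s : top_arc c s -> 1 <= c + s.
Proof. intros [H [Hc Hs]]. nra. Qed.

Lemma top_arc_sum_eq1 c s : top_arc c s -> c + s = 1 -> (c = 1 /\ s = 0) \/ (c = 0 /\ s = 1).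
Proof.
  intros [H [Hc Hs]] E. assert (c * s = 0) by nra.
  destruct (Rmult_integral _ _ H0); [right|left]; split; lra.
Qed.

Lemma bot_arc_s0 c s : bot_arc c s -> s = 0 -> c = 1 \/ c = -1.
Proof.
  intros [H _] ->. assert ((c - 1) * (c + 1) = 0) by nra.
  destruct (Rmult_integral _ _ H0); [left|right]; lra.
Qed.

Lemma circle_midpoint_inside c1 s1 c2 s2 : c1*c1 + s1*s1 = 1 -> c2*c2 + s2*s2 = 1 ->
  ~ (c1 = c2 /\ s1 = s2) -> ((c1+c2)/2) * ((c1+c2)/2) + ((s1+s2)/2) * ((s1+s2)/2) < 1.
Proof.
  intros H1 H2 Hne.
  assert (0 < (c1-c2)*(c1-c2) + (s1-s2)*(s1-s2)).
  { destruct (Req_dec c1 c2) as [->|Hc].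
    - assert (s1 <> s2) by tauto. assert (0 < (s1-s2)*(s1-s2)) by (apply Rsqr_pos_lt; lra). nra.
    - assert (0 < (c1-c2)*(c1-c2)) by (apply Rsqr_pos_lt; lra). nra. }
  nra.
Qed.

Lemma lift_midpoint a b c d z : vec4 ((a + c)/2) ((b + d)/2) z 1 =
  vadd (vscale (1 - 1/2) (vec4 a b z 1)) (vscale (1/2) (vec4 c d z 1)).
Proof. solve_vec_eq; field. Qed.

Section Forcing.
Variable F : VSet.
Hypothesis F_face : face 4 K_ex F.

Lemma all_top_of_interior tx ty : tx*tx + ty*ty < 1 -> tx + ty > 1 -> F (vec4 tx ty 1 1) ->
  all_top_in F.
Proof.
  intros H1 H2 Hf c s Hcs. split; auto. pose proof Hcs as [Hn [Hc Hs]].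
  (* 1 - |(1 + lam) t - lam g|^2 and the excess over the chord, as polynomials in lam *)
  destruct (near0_witness _ (near0_and _ _
     (quad_near0 (1 - (tx*tx + ty*ty)) (2*(tx*c + ty*s) - 2*(tx*tx + ty*ty))
                 (2*(tx*c + ty*s) - (tx*tx + ty*ty) - 1) ltac:(left; lra))
     (quad_near0 (tx + ty - 1) (tx + ty - c - s) 0 ltac:(left; lra)))) as [lam [Hl [Q1 Q2]]].
  apply (face_of_push 4 K_ex F F_face (vec4 tx ty 1 1) _ lam); auto.
  - apply (K_of_C (vec3 c s 1)), C_of_top; auto.
  - replace (vadd (vscale (1 + lam) (vec4 tx ty 1 1)) (vscale (- lam) (vec4 c s 1 1)))
      with (vec4 ((1+lam)*tx - lam*c) ((1+lam)*ty - lam*s) 1 1) by solve_vec_eq.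
    apply K_top_cap; nra.
Qed.

Lemma all_bot_of_interior bx by' : bx*bx + by'*by' < 1 -> 0 < by' -> F (vec4 bx by' (-1) 1) ->
  all_bot_in F.
Proof.
  intros H1 H2 Hf c s Hcs. split; auto. pose proof Hcs as [Hn Hs].
  destruct (near0_witness _ (near0_and _ _
     (quad_near0 (1 - (bx*bx + by'*by')) (2*(bx*c + by'*s) - 2*(bx*bx + by'*by'))
                 (2*(bx*c + by'*s) - (bx*bx + by'*by') - 1) ltac:(left; lra))
     (quad_near0 by' (by' - s) 0 ltac:(left; lra)))) as [lam [Hl [Q1 Q2]]].
  apply (face_of_push 4 K_ex F F_face (vec4 bx by' (-1) 1) _ lam); auto.
  - apply (K_of_C (vec3 c s (-1))), C_of_bot; auto.
  - replace (vadd (vscale (1 + lam) (vec4 bx by' (-1) 1)) (vscale (- lam) (vec4 c s (-1) 1)))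
      with (vec4 ((1+lam)*bx - lam*c) ((1+lam)*by' - lam*s) (-1) 1) by solve_vec_eq.
    apply K_bot_half_disk; nra.
Qed.

Lemma all_top_of_pair c1 s1 c2 s2 : top_in F c1 s1 -> top_in F c2 s2 -> ~ (c1 = c2 /\ s1 = s2) ->
  c1 + s1 > 1 \/ c2 + s2 > 1 -> all_top_in F.
Proof.
  intros [T1 F1] [T2 F2] Hne Hint.
  apply (all_top_of_interior ((c1 + c2)/2) ((s1 + s2)/2)).
  - apply circle_midpoint_inside; [apply T1|apply T2|auto].
  - pose proof (top_arc_sum_ge1 c1 s1 T1). pose proof (top_arc_sum_ge1 c2 s2 T2). lra.
  - rewrite lift_midpoint. apply (face_conv 4 K_ex F F_face); auto; lra.
Qed.

Lemma all_bot_of_pair c1 s1 c2 s2 : bot_in F c1 s1 -> bot_in F c2 s2 -> ~ (c1 = c2 /\ s1 = s2) ->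
  s1 > 0 \/ s2 > 0 -> all_bot_in F.
Proof.
  intros [B1 F1] [B2 F2] Hne Hint.
  apply (all_bot_of_interior ((c1 + c2)/2) ((s1 + s2)/2)).
  - apply circle_midpoint_inside; [apply B1|apply B2|auto].
  - destruct B1, B2. lra.
  - rewrite lift_midpoint. apply (face_conv 4 K_ex F F_face); auto; lra.
Qed.

(* Moving a top point by e d and a bottom point by - e d keeps their midpoint and,
   for small e, puts both in the interiors of the slices. *)
Lemma all_of_top_bot_along c1 s1 c2 s2 d1 d2 : top_in F c1 s1 -> bot_in F c2 s2 ->
  c1*d1 + s1*d2 < 0 -> 0 < c2*d1 + s2*d2 ->
  0 < c1 + s1 - 1 \/ (c1 + s1 - 1 = 0 /\ 0 < d1 + d2) -> 0 < s2 \/ (s2 = 0 /\ 0 < - d2) ->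
  all_top_in F /\ all_bot_in F.
Proof.
  intros [T1 F1] [B2 F2] Q1 Q2 Q3 Q4.
  destruct (near0_witness _ (near0_and _ _
    (near0_and _ _ (quad_near0 0 (-2*(c1*d1+s1*d2)) (-(d1*d1+d2*d2)) ltac:(right; lra))
                   (quad_near0 (c1+s1-1) (d1+d2) 0 Q3))
    (near0_and _ _ (quad_near0 0 (2*(c2*d1+s2*d2)) (-(d1*d1+d2*d2)) ltac:(right; lra))
                   (quad_near0 s2 (-d2) 0 Q4)))) as [e [He [[P1 P2] [P3 P4]]]].
  destruct T1 as [A1 _]. destruct B2 as [A2 _].
  assert (Fm : F (vadd (vscale (1 - 1/2) (vec4 c1 s1 1 1)) (vscale (1/2) (vec4 c2 s2 (-1) 1))))
    by (apply (face_conv 4 K_ex F F_face); auto; lra).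
  destruct (face_extreme 4 K_ex F F_face _ (vec4 (c1 + e*d1) (s1 + e*d2) 1 1)
              (vec4 (c2 - e*d1) (s2 - e*d2) (-1) 1) (1/2) Fm) as [Ft Fb].
  - apply K_top_cap; nra.
  - apply K_bot_half_disk; nra.
  - lra.
  - solve_vec_eq; field.
  - split; [apply (all_top_of_interior (c1 + e*d1) (s1 + e*d2))|
            apply (all_bot_of_interior (c2 - e*d1) (s2 - e*d2))]; auto; nra.
Qed.

Lemma all_of_top_bot c1 s1 c2 s2 : top_in F c1 s1 -> bot_in F c2 s2 ->
  ~ (c1 = c2 /\ s1 = s2) -> ~ (c1 = 0 /\ s1 = 1 /\ c2 <= 0) -> ~ (c1 = 1 /\ s1 = 0 /\ c2 = -1) ->
  all_top_in F /\ all_bot_in F.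
Proof.
  intros Ht Hb N1 N2 N3.
  pose proof Ht as [[A1 [B1 C1]] _]. pose proof Hb as [[A2 B2] _].
  assert (Hdot : c1*c2 + s1*s2 < 1) by (pose proof (circle_midpoint_inside c1 s1 c2 s2 A1 A2 N1); nra).
  pose proof (top_arc_sum_ge1 c1 s1 (conj A1 (conj B1 C1))) as Hs1.
  destruct (Rlt_or_le 1 (c1 + s1)) as [G1|G1].
  { apply (all_of_top_bot_along c1 s1 c2 s2 (c2 - c1) (s2 - s1)); auto; nra. }
  destruct (top_arc_sum_eq1 c1 s1 (conj A1 (conj B1 C1)) ltac:(lra)) as [[-> ->]|[-> ->]].
  - destruct (Rlt_or_le 1 (c2 + s2)) as [G2|G2].
    + assert (s2 > 0).
      { destruct (Req_dec s2 0) as [h|h]; [|lra]. destruct (bot_arc_s0 c2 s2 (conj A2 B2) h); lra. }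
      apply (all_of_top_bot_along 1 0 c2 s2 (c2 - 1) s2); auto; nra.
    + assert (Hs2 : 0 < s2).
      { destruct (Req_dec s2 0) as [h|h]; [exfalso|lra].
        destruct (bot_arc_s0 c2 s2 (conj A2 B2) h); [apply N1|apply N3]; repeat split; lra. }
      assert (c2 <= 0) by nra.
      apply (all_of_top_bot_along 1 0 c2 s2 (-1) 2); auto; lra.
  - destruct (Rlt_or_le 1 (c2 + s2)) as [G2|G2].
    + apply (all_of_top_bot_along 0 1 c2 s2 c2 (s2 - 1)); auto; nra.
    + assert (0 < c2) by (destruct (Rle_or_lt c2 0); auto; exfalso; apply N2; repeat split; auto).
      assert (s2 = 0) by nra. assert (c2 = 1) by nra. subst.
      apply (all_of_top_bot_along 0 1 1 0 2 (-1)); auto; lra.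
Qed.
End Forcing.

(** * Classification of the arc points of a proper face *)

Definition single_trace (P : R -> R -> Prop) : Prop :=
  forall c1 s1 c2 s2, P c1 s1 -> P c2 s2 -> c1 = c2 /\ s1 = s2.

Lemma not_single_trace (P : R -> R -> Prop) : ~ single_trace P ->
  exists c1 s1 c2 s2, P c1 s1 /\ P c2 s2 /\ ~ (c1 = c2 /\ s1 = s2).
Proof.
  intros N. apply NNPP. intro E. apply N. intros c1 s1 c2 s2 H1 H2.
  apply NNPP. intro D. apply E. exists c1, s1, c2, s2. auto.
Qed.

Lemma trace_value (P : R -> R -> Prop) (f : R -> R -> R) : single_trace P ->
  (forall c s, P c s -> 0 <= f c s) -> exists v, 0 <= v /\ forall c s, P c s -> f c s = v.
Proof.
  intros HP Hf. destruct (classic (exists c s, P c s)) as [[c0 [s0 H0]]|N].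
  - exists (f c0 s0). split; auto. intros c s H. destruct (HP c s c0 s0 H H0) as [-> ->]; auto.
  - exists 0. split; [lra|]. intros c s H. exfalso. apply N. eauto.
Qed.

Section ProperFaces.
Variable F : VSet.
Hypothesis F_face : face 4 K_ex F.
Hypothesis F_proper : ~ set_eq F K_ex.

Lemma not_all_top_and_bot : ~ (all_top_in F /\ all_bot_in F).
Proof. intros [AT AB]. exact (F_proper (K_face_all_arcs F F_face AT AB)). Qed.

Lemma no_bot_of_all_top : all_top_in F -> forall c s, ~ bot_in F c s.
Proof.
  intros AT c s Hb. apply not_all_top_and_bot.
  (* pair the bottom point with an interior point of the quarter circle distinct from it *)
  destruct (classic (c = 3/5 /\ s = 4/5)) as [[-> ->]|E].
  - apply (all_of_top_bot F F_face (4/5) (3/5) (3/5) (4/5)); auto; try (apply AT; split); lra.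
  - apply (all_of_top_bot F F_face (3/5) (4/5) c s); auto; try (apply AT; split); lra.
Qed.

Lemma no_top_of_all_bot : all_bot_in F -> forall c s, ~ top_in F c s.
Proof.
  intros AB c s Ht. apply not_all_top_and_bot.
  destruct (classic (c = 3/5 /\ s = 4/5)) as [[-> ->]|E].
  - apply (all_of_top_bot F F_face (3/5) (4/5) (4/5) (3/5)); auto; try (apply AB; split); lra.
  - apply (all_of_top_bot F F_face c s (3/5) (4/5)); auto; try (apply AB; split); lra.
Qed.

Lemma top_bot_rigid c1 s1 c2 s2 : ~ all_top_in F -> top_in F c1 s1 -> bot_in F c2 s2 ->
  (c1 = c2 /\ s1 = s2) \/ (c1 = 0 /\ s1 = 1 /\ c2 <= 0) \/ (c1 = 1 /\ s1 = 0 /\ c2 = -1).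
Proof.
  intros nAT Ht Hb. apply NNPP. intro N. apply nAT.
  apply (all_of_top_bot F F_face c1 s1 c2 s2); auto.
Qed.

Lemma top_trace_cases : ~ all_top_in F ->
  single_trace (top_in F) \/
  (top_in F 1 0 /\ top_in F 0 1 /\ forall c s, top_in F c s -> c + s = 1).
Proof.
  intros nAT. destruct (classic (single_trace (top_in F))) as [S|N]; [left; auto|right].
  (* two distinct top points force all of the arc unless both are endpoints *)
  assert (Hend : forall c1 s1 c2 s2, top_in F c1 s1 -> top_in F c2 s2 -> ~ (c1 = c2 /\ s1 = s2) ->
            c1 + s1 = 1).
  { intros c1 s1 c2 s2 H1 H2 D.
    pose proof (top_arc_sum_ge1 c1 s1 (top_in_arc F c1 s1 H1)).
    pose proof (top_arc_sum_ge1 c2 s2 (top_in_arc F c2 s2 H2)).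
    destruct (Rle_lt_or_eq_dec 1 (c1 + s1)) as [G|G]; auto; exfalso.
    apply nAT, (all_top_of_pair F F_face c1 s1 c2 s2); auto; lra. }
  destruct (not_single_trace _ N) as [c1 [s1 [c2 [s2 [H1 [H2 D]]]]]].
  assert (D' : ~ (c2 = c1 /\ s2 = s1)) by (intros [? ?]; apply D; split; congruence).
  assert (Hchord : top_in F 1 0 -> forall c s, top_in F c s -> c + s = 1).
  { intros HP c s H. destruct (classic (c = 1 /\ s = 0)) as [[-> ->]|E]; [lra|].
    exact (Hend c s 1 0 H HP E). }
  destruct (top_arc_sum_eq1 c1 s1 (top_in_arc F c1 s1 H1) (Hend _ _ _ _ H1 H2 D)) as [[-> ->]|[-> ->]];
  destruct (top_arc_sum_eq1 c2 s2 (top_in_arc F c2 s2 H2) (Hend _ _ _ _ H2 H1 D')) as [[-> ->]|[-> ->]];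
    first [exfalso; apply D; split; reflexivity | split; [|split]; auto].
Qed.

Lemma bot_trace_cases : ~ all_bot_in F ->
  single_trace (bot_in F) \/
  (bot_in F 1 0 /\ bot_in F (-1) 0 /\ forall c s, bot_in F c s -> s = 0).
Proof.
  intros nAB. destruct (classic (single_trace (bot_in F))) as [S|N]; [left; auto|right].
  assert (Hdiam : forall c1 s1 c2 s2, bot_in F c1 s1 -> bot_in F c2 s2 -> ~ (c1 = c2 /\ s1 = s2) ->
            s1 = 0).
  { intros c1 s1 c2 s2 H1 H2 D. destruct (bot_in_arc F c1 s1 H1) as [_ [G|G]]; auto; exfalso.
    apply nAB, (all_bot_of_pair F F_face c1 s1 c2 s2); auto; lra. }
  destruct (not_single_trace _ N) as [c1 [s1 [c2 [s2 [H1 [H2 D]]]]]].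
  assert (D' : ~ (c2 = c1 /\ s2 = s1)) by (intros [? ?]; apply D; split; congruence).
  pose proof (Hdiam _ _ _ _ H1 H2 D) as E1. pose proof (Hdiam _ _ _ _ H2 H1 D') as E2.
  assert (Hline : bot_in F 1 0 -> forall c s, bot_in F c s -> s = 0).
  { intros HP c s H. destruct (classic (c = 1 /\ s = 0)) as [[-> ->]|E]; [lra|].
    exact (Hdiam c s 1 0 H HP E). }
  destruct (bot_arc_s0 c1 s1 (bot_in_arc F c1 s1 H1) E1) as [->| ->];
  destruct (bot_arc_s0 c2 s2 (bot_in_arc F c2 s2 H2) E2) as [->| ->]; subst;
    first [exfalso; apply D; split; reflexivity | split; [|split]; auto; apply Hline; auto].
Qed.
End ProperFaces.

(** * Extending nonnegative functionals from a face to K *)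

Definition aff (k : Vec) (c s z : R) : R := k 0%nat * c + k 1%nat * s + k 2%nat * z + k 3%nat.

Definition arc_nonneg (k : Vec) : Prop :=
  (forall c s, top_arc c s -> 0 <= aff k c s 1) /\ (forall c s, bot_arc c s -> 0 <= aff k c s (-1)).

Definition agrees_on_arcs (F : VSet) (k x : Vec) : Prop :=
  (forall c s, top_in F c s -> aff k c s 1 = aff x c s 1) /\
  (forall c s, bot_in F c s -> aff k c s (-1) = aff x c s (-1)).

Definition extends_from (F : VSet) (x : Vec) : Prop :=
  exists k, inRn 4 k /\ arc_nonneg k /\ agrees_on_arcs F k x.

Lemma ip_vec4_aff k c s z : ip 4 k (vec4 c s z 1) = aff k c s z.
Proof. unfold aff; simpl; ring. Qed.

Lemma dual_of_arc_nonneg k : inRn 4 k -> arc_nonneg k -> dual 4 K_ex k.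
Proof.
  intros Hk [Ht Hb]. split; auto. intros w Hw. apply K_char in Hw.
  destruct Hw as [lam [c [Hl [Hc ->]]]]. rewrite ip_vscale.
  enough (ip 3 k c >= - k 3%nat) by (apply Rle_ge, Rmult_le_pos; auto; simpl in *; lra).
  apply (C_ip_ge k (- k 3%nat)); auto; intros x y H; [specialize (Ht x y H)|specialize (Hb x y H)];
    unfold aff in *; simpl; lra.
Qed.

Lemma aff_ge_neg_norm1 x c s z : -1 <= c <= 1 -> -1 <= s <= 1 -> -1 <= z <= 1 ->
  - norm1 4 x <= aff x c s z.
Proof.
  intros Hc Hs Hz. rewrite <- ip_vec4_aff.
  assert (H := ip_abs_le 4 x (vec4 c s z 1) 1).
  enough (Rabs (ip 4 x (vec4 c s z 1)) <= norm1 4 x) by (pose proof (Rle_abs (- ip 4 x (vec4 c s z 1)));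
    rewrite Rabs_Ropp in *; lra).
  rewrite <- (Rmult_1_r (norm1 4 x)). apply H.
  intros [|[|[|[|i]]]] Hi; simpl; try lia; apply Rabs_le; lra.
Qed.

Lemma top_arc_bounds c s : top_arc c s -> -1 <= c <= 1 /\ -1 <= s <= 1.
Proof. intros [H [Hc Hs]]. split; nra. Qed.

Lemma bot_arc_bounds c s : bot_arc c s -> -1 <= c <= 1 /\ -1 <= s <= 1.
Proof. intros [H Hs]. split; nra. Qed.

Section Extensions.
Variables (F : VSet) (x : Vec).

(* Tilting x by a multiple of 1 - z, which vanishes on the upper slice. *)
Lemma extends_all_top : (forall c s, top_arc c s -> 0 <= aff x c s 1) ->
  (forall c s, ~ bot_in F c s) -> extends_from F x.
Proof.
  intros Hx Hb. pose proof (norm1_ge0 4 x) as HM.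
  exists (vec4 (x 0%nat) (x 1%nat) (x 2%nat - norm1 4 x) (x 3%nat + norm1 4 x)).
  split; [apply inRn_vec4|split; split].
  - intros c s H. specialize (Hx c s H). unfold aff in *. simpl. lra.
  - intros c s H. destruct (bot_arc_bounds c s H) as [Bc Bs].
    pose proof (aff_ge_neg_norm1 x c s (-1) Bc Bs ltac:(lra)) as B.
    unfold aff in *. simpl in *. lra.
  - intros c s _. unfold aff. simpl. ring.
  - intros c s H. exfalso. exact (Hb c s H).
Qed.

Lemma extends_all_bot : (forall c s, bot_arc c s -> 0 <= aff x c s (-1)) ->
  (forall c s, ~ top_in F c s) -> extends_from F x.
Proof.
  intros Hx Ht. pose proof (norm1_ge0 4 x) as HM.
  exists (vec4 (x 0%nat) (x 1%nat) (x 2%nat + norm1 4 x) (x 3%nat + norm1 4 x)).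
  split; [apply inRn_vec4|split; split].
  - intros c s H. destruct (top_arc_bounds c s H) as [Bc Bs].
    pose proof (aff_ge_neg_norm1 x c s 1 Bc Bs ltac:(lra)) as B.
    unfold aff in *. simpl in *. lra.
  - intros c s H. specialize (Hx c s H). unfold aff in *. simpl. lra.
  - intros c s H. exfalso. exact (Ht c s H).
  - intros c s _. unfold aff. simpl. ring.
Qed.

(* The functional a (1 + z)/2 + b (1 - z)/2. *)
Lemma extends_two_levels a b : 0 <= a -> 0 <= b ->
  (forall c s, top_in F c s -> aff x c s 1 = a) -> (forall c s, bot_in F c s -> aff x c s (-1) = b) ->
  extends_from F x.
Proof.
  intros Ha Hb Ht Hbt.
  exists (vec4 0 0 ((a - b)/2) ((a + b)/2)). split; [apply inRn_vec4|split; split];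
    intros c s H; [| |rewrite (Ht c s H)|rewrite (Hbt c s H)]; unfold aff; simpl; lra.
Qed.

Definition xP := aff x 1 0 1.
Definition xQ := aff x 0 1 1.
Definition xP' := aff x 1 0 (-1).
Definition xR' := aff x (-1) 0 (-1).

(* Dual basis of the points (1,0,1), (0,1,1), (-1,0,-1):  c + (1 - z)/2,  s,  (1 - z)/2. *)
Lemma extends_chord b : 0 <= xP -> 0 <= xQ -> 0 <= b ->
  (forall c s, top_in F c s -> c + s = 1) ->
  (forall c s, bot_in F c s -> c = -1 /\ s = 0 /\ aff x c s (-1) = b) ->
  extends_from F x.
Proof.
  intros HP HQ Hb Ht Hbt.
  exists (vec4 xP xQ (-(xP + b)/2) ((xP + b)/2)). split; [apply inRn_vec4|split; split].
  - intros c s [H [Hc Hs]]. unfold aff. simpl. nra.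
  - intros c s [H Hs]. assert (-1 <= c) by nra. unfold aff. simpl. nra.
  - intros c s H. specialize (Ht c s H). unfold xP, xQ, aff in *. simpl.
    replace c with (1 - s) by lra. field.
  - intros c s H. destruct (Hbt c s H) as [-> [-> <-]]. unfold aff. simpl. field.
Qed.

(* Dual basis of the points (1,0,1), (1,0,-1), (-1,0,-1):  (1 + z)/2,  (c + s - z)/2,  (1 - c)/2. *)
Lemma extends_diameter a : 0 <= xP' -> 0 <= xR' -> 0 <= a ->
  (forall c s, top_in F c s -> c = 1 /\ s = 0 /\ aff x c s 1 = a) ->
  (forall c s, bot_in F c s -> s = 0) ->
  extends_from F x.
Proof.
  intros HP HR Ha Ht Hbt.
  exists (vec4 ((xP' - xR')/2) (xP'/2) ((a - xP')/2) ((a + xR')/2)).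
  split; [apply inRn_vec4|split; split].
  - intros c s Hcs. pose proof (top_arc_sum_ge1 c s Hcs) as Hsum. destruct Hcs as [H [Hc Hs]].
    assert (c <= 1) by nra. unfold aff. simpl. nra.
  - intros c s [H Hs]. assert (-1 <= c <= 1) by (split; nra). unfold aff. simpl. nra.
  - intros c s H. destruct (Ht c s H) as [-> [-> <-]]. unfold aff. simpl. field.
  - intros c s H. pose proof (Hbt c s H) as ->.
    destruct (bot_arc_s0 c 0 (bot_in_arc F c 0 H) eq_refl) as [->| ->];
      unfold xP', xR', aff; simpl; field.
Qed.
End Extensions.

Lemma K_face_extends F x : face 4 K_ex F -> ~ set_eq F K_ex ->
  (forall c s, top_in F c s -> 0 <= aff x c s 1) -> (forall c s, bot_in F c s -> 0 <= aff x c s (-1)) ->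
  extends_from F x.
Proof.
  intros HF Hprop Hxt Hxb.
  destruct (classic (all_top_in F)) as [AT|nAT].
  { apply extends_all_top; [intros c s H; apply Hxt, AT; auto|apply no_bot_of_all_top; auto]. }
  destruct (classic (all_bot_in F)) as [AB|nAB].
  { apply extends_all_bot; [intros c s H; apply Hxb, AB; auto|apply no_top_of_all_bot; auto]. }
  pose proof (top_bot_rigid F HF) as Rig.
  destruct (top_trace_cases F HF nAT) as [Ts|[TP [TQ Tc]]];
  destruct (bot_trace_cases F HF nAB) as [Bs|[BP [BR Bd]]].
  - destruct (trace_value _ (fun c s => aff x c s 1) Ts Hxt) as [a [Ha Ea]].
    destruct (trace_value _ (fun c s => aff x c s (-1)) Bs Hxb) as [b [Hb Eb]].
    apply (extends_two_levels F x a b); auto.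
  - (* a top point of F must lie above (1,0,-1) *)
    destruct (trace_value _ (fun c s => aff x c s 1) Ts Hxt) as [a [Ha Ea]].
    apply (extends_diameter F x a); [apply Hxb, BP|apply Hxb, BR|auto| |auto].
    intros c s H. destruct (Rig c s 1 0 nAT H BP) as [[-> ->]|[[_ [_ ?]]|[_ [_ ?]]]]; try lra; auto.
  - (* only (-1,0,-1) is compatible with both (1,0,1) and (0,1,1) *)
    destruct (trace_value _ (fun c s => aff x c s (-1)) Bs Hxb) as [b [Hb Eb]].
    apply (extends_chord F x b); [apply Hxt, TP|apply Hxt, TQ|auto|auto|].
    intros c s H.
    assert (Hc : c = -1).
    { destruct (Rig 1 0 c s nAT TP H) as [[? ?]|[[? _]|[_ [_ ?]]]]; try lra.
      destruct (Rig 0 1 c s nAT TQ H) as [[? ?]|[[_ [_ ?]]|[? _]]]; lra. }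
    destruct (bot_in_arc F c s H) as [Hn _]. subst c. assert (s = 0) by nra. subst s.
    split; [|split]; auto.
  - exfalso. destruct (Rig 0 1 1 0 nAT TQ BP) as [[? ?]|[[_ [_ ?]]|[? _]]]; lra.
Qed.

Lemma K_facially_dual_complete : facially_dual_complete 4 K_ex.
Proof.
  intros F HF _ Hprop x Hx.
  assert (Ix : inRn 4 x) by apply Hx.
  assert (Hnn : forall w, F w -> ip 4 x w >= 0)
    by (intros; apply (face_ip_ge0_of_closure 4 K_ex F HF); auto).
  destruct (K_face_extends F x HF Hprop) as [k [Ik [Kk [Et Eb]]]];
    [intros c s [_ H]|intros c s [_ H]|]; try (specialize (Hnn _ H); rewrite ip_vec4_aff in Hnn; lra).
  exists k, (vadd x (vscale (-1) k)). split; [apply dual_of_arc_nonneg; auto|split].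
  - split; [apply inRn_vadd, inRn_vscale; auto|].
    apply (K_face_ip_zero F HF); intros c s H;
      rewrite ip_sym, ip_vadd, ip_vscale, !(ip_sym 4 (vec4 _ _ _ _)), !ip_vec4_aff;
      [rewrite (Et c s H)|rewrite (Eb c s H)]; ring.
  - apply vext; intro; unfold vadd, vscale; ring.
Qed.

Theorem mainTheorem8 :
  facially_dual_complete 4 K_ex /\
  ~ facially_exposed 3 (tangent 3 xbar C_ex) /\
  ~ strongly_tangentially_exposed 4 K_ex.
Proof.
  split; [exact K_facially_dual_complete|].
  split; [exact T_C_not_facially_exposed|exact K_not_strongly_tangentially_exposed].
Qed.
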